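(* Let $\mathcal M_1,\mathcal M_2,\dots$ be LMCs $\mathcal M_i=(S,L,\tau_i,\ell)$ sharing the state set, label set and labelling. Suppose that for each $s\in S$ there is a finite set $N(s)\subseteq S$ with $\mathrm{support}(\tau_i(s))\subseteq N(s)$ for all $i$. Let $S_0\subseteq S$ be finite with $\liminf_{i\to\infty}\max\{d_{\mathcal M_i}(s,t):s,t\in S_0\}=0$, and put $N=\bigcup_{s\in S_0}N(s)$. Then there exist a function $\tau:S_0\to\mathrm{Distr}(S)$, a partition $\{S_1,\dots,S_k\}$ of $N$, and a distribution $\mu$ on $\{1,\dots,k\}$ such that $\tau(s)(S_j)=\mu(j)$ for all $s\in S_0$ and $1\le j\le k$, and \[\liminf_{i\to\infty}\max\Big(\{|\tau_i(s)-\tau(s)|:s\in S_0\}\cup\{|\tau_i(s)(S_j)-\mu(j)|:s\in S_0,1\le j\le k\}\cup\{d_{\mathcal M_i}(u,v):1\le j\le k,\ u,v\in S_j\}\Big)=0.\]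
   Context: An LMC $(S,L,\tau,\ell)$ has a nonempty countable state set $S$, finite label set $L$, finitely-branching transition function $\tau:S\to\mathrm{Distr}(S)$ and labelling $\ell:S\to L$. Its probabilistic bisimilarity distance $d$ is the least fixed point of $\Delta(e)(s,t)=1$ if $\ell(s)\ne\ell(t)$, and $\Delta(e)(s,t)=\min_{\omega}\sum_{u,v}\omega(u,v)e(u,v)$ otherwise, the minimum over couplings $\omega\in\mathrm{Distr}(S\times S)$ with marginals $\tau(s)$ and $\tau(t)$. For finitely supported real vectors, $|\cdot|$ denotes the $L_1$ norm, so $|\tau_i(s)-\tau(s)|=\sum_{x\in S}|\tau_i(s)(x)-\tau(s)(x)|$; $\tau(s)(E)=\sum_{x\in E}\tau(s)(x)$. *)

From mathcomp Require Import all_boot all_order all_algebra.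
From mathcomp Require Import all_classical all_reals.
From mathcomp Require Import ereal sequences.
Set Implicit Arguments. Unset Strict Implicit. Unset Printing Implicit Defensive.
Import Order.TTheory GRing.Theory Num.Theory.
Local Open Scope classical_set_scope.
Local Open Scope ring_scope.

Section LMC.
Context {R : realType}.

Definition is_distr (T : choiceType) (f : T -> R) : Prop :=
  (forall x, 0 <= f x) /\ finite_set [set x | f x != 0] /\
  \sum_(x \in [set: T]) f x = 1.

Definition prob_of (T : choiceType) (f : T -> R) (E : set T) : R :=
  \sum_(x \in E) f x.

Definition l1dist (T : choiceType) (f g : T -> R) : R :=
  \sum_(x \in [set: T]) `|f x - g x|.

Context {S : countType} {L : finType}.

Definition is_coupling (mu nu : S -> R) (w : S * S -> R) : Prop :=
  is_distr w /\
  (forall u, \sum_(v \in [set: S]) w (u, v) = mu u) /\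
  (forall v, \sum_(u \in [set: S]) w (u, v) = nu v).

(* The operator Delta (the minimum over couplings, written as inf; it is attained) *)
Definition Delta (lab : S -> L) (tau : S -> S -> R) (e : S -> S -> R)
    (s t : S) : R :=
  if lab s != lab t then 1
  else inf [set c | exists w, is_coupling (tau s) (tau t) w /\
                       c = \sum_(p \in [set: S * S]) w p * e p.1 p.2].

Definition unit_valued (e : S -> S -> R) : Prop :=
  forall s t, 0 <= e s t <= 1.

(* d is the least fixed point of Delta on [0,1]^(S x S):
   the probabilistic bisimilarity distance of (S, L, tau, lab) *)
Definition is_bisim_dist (lab : S -> L) (tau : S -> S -> R)
    (d : S -> S -> R) : Prop :=
  unit_valued d /\ (forall s t, Delta lab tau d s t = d s t) /\
  (forall e, unit_valued e -> (forall s t, Delta lab tau e s t = e s t) ->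
     forall s t, d s t <= e s t).

Definition is_LMC (tau : S -> S -> R) : Prop := forall s, is_distr (tau s).

End LMC.

(* maximum of a finite set of nonnegative reals { F p | p in A } (0 if empty) *)
Notation bigmax_set A F := (\big[Num.max/0%R]_(p \in A) F p).

(* Pass to a subsequence along which the diameter of [S0] tends to 0 and, by
   Bolzano--Weierstrass, all the finitely many probabilities [tau_i s x]
   (s in S0, x in N) and distances [d_i u v] (u, v in N) converge.  Each [d_i]
   is a pseudometric, hence so is the limit distance on [N]; its zero-classes
   form the partition.  For [s, t] in [S0], near-optimal couplings of [tau_i s]
   and [tau_i t] cost about [d_i s t -> 0], so the mass they put on pairs lying
   in different classes, which are at positive limit distance, vanishes: all
   the limit distributions give each class the same mass [mu j].  Along the
   subsequence every term of the maximum tends to 0, so its liminf is 0. *)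

From mathcomp Require Import all_boot all_order all_algebra.
From mathcomp Require Import all_classical all_reals.
From mathcomp Require Import ereal sequences.
From mathcomp Require Import topology normedtype.
From mathcomp Require Import lra.
Import Order.TTheory GRing.Theory Num.Theory.
Import numFieldNormedType.Exports.
Local Open Scope classical_set_scope.
Local Open Scope ring_scope.
Set Implicit Arguments. Unset Strict Implicit.

Section FiniteSums.
Variable R : realType.

Definition fseq (T : choiceType) (A : set T) : seq T :=
  finmap.enum_fset (fset_set A).

Lemma fseq_uniq (T : choiceType) (A : set T) : uniq (fseq A).
Proof. exact: finmap.fset_uniq. Qed.

Lemma mem_fseq (T : choiceType) (A : set T) x :
  finite_set A -> (x \in fseq A) <-> A x.
Proof. by move=> fA; rewrite /fseq in_fset_set //; split => [/set_mem|/mem_set]. Qed.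

Definition supp (T : choiceType) (f : T -> R) : seq T := fseq [set x | f x != 0].

Lemma supp_uniq (T : choiceType) (f : T -> R) : uniq (supp f).
Proof. exact: fseq_uniq. Qed.

Lemma mem_supp (T : choiceType) (f : T -> R) x :
  finite_set [set x | f x != 0] -> (x \in supp f) = (f x != 0).
Proof. by move=> ff; apply/idP/idP => /(mem_fseq x ff). Qed.

Lemma fsumT_seq (T : choiceType) (r : seq T) (f : T -> R) : uniq r ->
  (forall x, x \notin r -> f x = 0) ->
  \sum_(x \in [set: T]) f x = \sum_(x <- r) f x.
Proof.
move=> ur f0; rewrite -(fsbig_widen [set` r] setT f) //; last first.
  by move=> x [_ /negP /f0].
by rewrite [RHS]fsbig_seq.
Qed.

Lemma fsumT_supp (T : choiceType) (f : T -> R) :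
  finite_set [set x | f x != 0] ->
  \sum_(x \in [set: T]) f x = \sum_(x <- supp f) f x.
Proof.
move=> ff; apply: fsumT_seq; first exact: supp_uniq.
by move=> x; rewrite mem_supp // negbK => /eqP.
Qed.

Lemma fsumTT_seq (T1 T2 : choiceType) (r1 : seq T1) (r2 : seq T2)
    (f : T1 * T2 -> R) : uniq r1 -> uniq r2 ->
  (forall p, f p != 0 -> (p.1 \in r1) && (p.2 \in r2)) ->
  \sum_(p \in [set: T1 * T2]) f p = \sum_(x <- r1) \sum_(y <- r2) f (x, y).
Proof.
move=> u1 u2 fr; rewrite (@fsumT_seq _ [seq (x, y) | x <- r1, y <- r2]).
- by rewrite big_allpairs.
- by apply: allpairs_uniq => // -[a b] [c e] _ _ /= [-> ->].
- move=> [x y] xy; apply/eqP; apply: contraNT xy => /fr /andP[/= x1 y2].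
  exact: allpairs_f.
Qed.

Lemma ler_sum_seq_term (T : eqType) (f : T -> R) (r : seq T) x : uniq r ->
  (forall y, 0 <= f y) -> x \in r -> f x <= \sum_(y <- r) f y.
Proof. by move=> ur f0 xr; rewrite (bigD1_seq x) //= lerDl sumr_ge0. Qed.

Lemma ler_fsumT_term (T : choiceType) (f : T -> R) x :
  (forall y, 0 <= f y) -> finite_set [set y | f y != 0] ->
  f x <= \sum_(y \in [set: T]) f y.
Proof.
move=> f0 ff; rewrite fsumT_supp //; have [->|fx] := eqVneq (f x) 0.
  exact: sumr_ge0.
by apply: ler_sum_seq_term; rewrite ?supp_uniq ?mem_supp.
Qed.

Lemma sum_seq_pred1 (T : eqType) (r : seq T) (u : T) (c : R) : uniq r ->
  \sum_(v <- r) (if u == v then c else 0) = if u \in r then c else 0.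
Proof.
move=> ur; case: ifP => ur'.
  rewrite (bigD1_seq u) //= eqxx big1 ?addr0 // => v; rewrite eq_sym => /negPf ->.
  by [].
by rewrite big1_seq // => v /andP[_ vr]; case: eqP => // uv; rewrite uv vr in ur'.
Qed.

Lemma prob_of_seq (T : choiceType) (f : T -> R) (B : set T) (r : seq T) :
  uniq r -> B `<=` [set` r] ->
  prob_of f B = \sum_(x <- r) (if x \in B then f x else 0).
Proof.
move=> ur Br; rewrite /prob_of fsbig_mkcond (fsumT_seq ur) // => x xr.
by rewrite /patch; case: ifP => // /set_mem /Br /=; rewrite (negbTE xr).
Qed.

Lemma prob_of_partition (T : choiceType) (f : T -> R) (A : set T) k
    (P : 'I_k -> set T) : finite_set A ->
  (forall j j', j != j' -> P j `&` P j' = set0) ->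
  \bigcup_(j in [set: 'I_k]) P j = A ->
  \sum_(j < k) prob_of f (P j) = prob_of f A.
Proof.
move=> fA Pdisj PA.
have inA x : A x -> x \in fseq A by move/(mem_fseq x fA).
have PjA j : P j `<=` [set` fseq A] by move=> x Pjx; apply: inA; rewrite -PA; exists j.
rewrite (prob_of_seq f (fseq_uniq A) inA).
under eq_bigr => j _ do rewrite (prob_of_seq f (fseq_uniq A) (PjA j)).
rewrite exchange_big; apply: eq_big_seq => x /(mem_fseq x fA) Ax.
rewrite (mem_set Ax); have := Ax; rewrite -PA => -[j0 _ Pj0x].
rewrite (bigD1 j0) //= (mem_set Pj0x) big1 ?addr0 // => j jj0.
case: ifP => // /set_mem Pjx.
by have := Pdisj j j0 jj0; rewrite -subset0 => /(_ x (conj Pjx Pj0x)).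
Qed.

End FiniteSums.

Section Distributions.
Variable R : realType.
Implicit Types (T : choiceType).

Lemma distr_ge0 T (f : T -> R) x : is_distr f -> 0 <= f x.
Proof. by case=> f0 _. Qed.

Lemma distr_fin T (f : T -> R) : is_distr f -> finite_set [set x | f x != 0].
Proof. by case=> _ []. Qed.

Lemma distr_supp T (f : T -> R) : is_distr f -> \sum_(x <- supp f) f x = 1.
Proof. by move=> [_ [ff f1]]; rewrite -fsumT_supp. Qed.

Lemma distr_le1 T (f : T -> R) x : is_distr f -> f x <= 1.
Proof.
move=> df; have [_ [ff <-]] := df.
by apply: ler_fsumT_term => // y; apply: distr_ge0.
Qed.

Lemma distr_partition T (f : T -> R) (A : set T) k (P : 'I_k -> set T) :
  is_distr f -> (forall x, f x != 0 -> A x) -> finite_set A ->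
  (forall j j', j != j' -> P j `&` P j' = set0) ->
  \bigcup_(j in [set: 'I_k]) P j = A ->
  is_distr (fun j => prob_of f (P j)).
Proof.
move=> df fA finA Pdisj PA.
split; first by move=> j; apply: fsumr_ge0 => x _; apply: distr_ge0.
split; first exact: finite_finset.
rewrite (fsumT_seq (enum_uniq 'I_k)); last by move=> j; rewrite mem_enum.
rewrite big_enum /= (prob_of_partition f finA) //; have [_ [_ <-]] := df.
by apply: fsbig_widen => // x [_ nAx]; apply/eqP/negPn/negP => /fA.
Qed.

End Distributions.

Section Couplings.
Variables (R : realType) (S : countType).
Implicit Types (mu nu rho : S -> R) (w : S * S -> R).

Lemma coupling_ge0 mu nu w p : is_coupling mu nu w -> 0 <= w p.
Proof. by case=> [[w0 _] _]. Qed.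

Lemma coupling_supp mu nu w p : is_coupling mu nu w ->
  w p != 0 -> (mu p.1 != 0) && (nu p.2 != 0).
Proof.
case: p => u v [[w0 [wf _]] [m1 m2]] /= wuv.
have wpos : 0 < w (u, v) by rewrite lt_neqAle eq_sym wuv w0.
have fin1 : finite_set [set y | w (u, y) != 0].
  by apply: sub_finite_set (finite_image snd wf) => y wy; exists (u, y).
have fin2 : finite_set [set x | w (x, v) != 0].
  by apply: sub_finite_set (finite_image fst wf) => x wx; exists (x, v).
have le1 : w (u, v) <= mu u by rewrite -m1; apply: (ler_fsumT_term (f := fun y => w (u, y))).
have le2 : w (u, v) <= nu v by rewrite -m2; apply: (ler_fsumT_term (f := fun x => w (x, v))).
by rewrite !gt_eqF // (lt_le_trans wpos).
Qed.

Lemma coupling_marg1_seq mu nu w (r : seq S) : is_coupling mu nu w -> uniq r ->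
  (forall v, nu v != 0 -> v \in r) -> forall u, \sum_(v <- r) w (u, v) = mu u.
Proof.
move=> hc ur nur u; have [_ [<- _]] := hc; rewrite (fsumT_seq ur) // => v vr.
by apply/eqP; apply: contraNT vr => /(coupling_supp hc) /andP[_ /nur].
Qed.

Lemma coupling_marg2_seq mu nu w (r : seq S) : is_coupling mu nu w -> uniq r ->
  (forall u, mu u != 0 -> u \in r) -> forall v, \sum_(u <- r) w (u, v) = nu v.
Proof.
move=> hc ur mur v; have [_ [_ <-]] := hc; rewrite (fsumT_seq ur) // => u ur'.
by apply/eqP; apply: contraNT ur' => /(coupling_supp hc) /andP[/mur].
Qed.

Lemma coupling_marg1 mu nu w : is_distr nu -> is_coupling mu nu w ->
  forall u, \sum_(v <- supp nu) w (u, v) = mu u.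
Proof.
move=> dn hc; apply: (coupling_marg1_seq hc (supp_uniq _)) => v.
by rewrite mem_supp //; apply: distr_fin.
Qed.

Lemma coupling_marg2 mu nu w : is_distr mu -> is_coupling mu nu w ->
  forall v, \sum_(u <- supp mu) w (u, v) = nu v.
Proof.
move=> dm hc; apply: (coupling_marg2_seq hc (supp_uniq _)) => u.
by rewrite mem_supp //; apply: distr_fin.
Qed.

Lemma coupling_sum mu nu w (F : S * S -> R) : is_distr mu -> is_distr nu ->
  is_coupling mu nu w ->
  \sum_(p \in [set: S * S]) w p * F p =
  \sum_(u <- supp mu) \sum_(v <- supp nu) w (u, v) * F (u, v).
Proof.
move=> dm dn hc; apply: fsumTT_seq; try exact: supp_uniq.
move=> p; rewrite mulf_eq0 negb_or => /andP[/(coupling_supp hc) /andP[h1 h2] _].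
by rewrite !mem_supp ?h1 ?h2 //; apply: distr_fin.
Qed.

Lemma coupling_total mu nu w : is_distr mu -> is_distr nu ->
  is_coupling mu nu w -> \sum_(u <- supp mu) \sum_(v <- supp nu) w (u, v) = 1.
Proof.
by move=> dm dn hc; under eq_bigr do rewrite (coupling_marg1 dn hc); apply: distr_supp.
Qed.

Lemma coupling_of_seq mu nu w (r1 r2 : seq S) : is_distr mu ->
  (forall p, 0 <= w p) -> uniq r1 -> uniq r2 ->
  (forall p, w p != 0 -> (p.1 \in r1) && (p.2 \in r2)) ->
  (forall u, \sum_(v <- r2) w (u, v) = mu u) ->
  (forall v, \sum_(u <- r1) w (u, v) = nu v) -> is_coupling mu nu w.
Proof.
move=> dm w0 u1 u2 wr m1 m2.
have z1 u v : v \notin r2 -> w (u, v) = 0.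
  by move=> vr; apply/eqP; apply: contraNT vr => /wr /andP[].
have z2 u v : u \notin r1 -> w (u, v) = 0.
  by move=> ur; apply/eqP; apply: contraNT ur => /wr /andP[].
split; [split; [exact: w0|split]|split].
- apply: (@sub_finite_set _ _ ([set` r1] `*` [set` r2])).
    by move=> p /= /wr /andP[].
  by apply: finite_setX; apply: finite_seq.
- rewrite (fsumTT_seq u1 u2 wr); under eq_bigr do rewrite m1.
  have [_ [_ <-]] := dm; symmetry; apply: fsumT_seq => // u ur.
  by rewrite -m1 big1 // => v _; apply: z2.
- by move=> u; rewrite (fsumT_seq u2) ?m1 // => v; apply: z1.
- by move=> v; rewrite (fsumT_seq u1) ?m2 // => u; apply: z2.
Qed.

Lemma prod_coupling mu nu : is_distr mu -> is_distr nu ->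
  is_coupling mu nu (fun p => mu p.1 * nu p.2).
Proof.
move=> dm dn; apply: (@coupling_of_seq _ _ _ (supp mu) (supp nu)) => //.
- by move=> p; rewrite mulr_ge0 ?(distr_ge0 _ dm) ?(distr_ge0 _ dn).
- exact: supp_uniq.
- exact: supp_uniq.
- move=> p; rewrite mulf_eq0 negb_or => /andP[h1 h2].
  by rewrite !mem_supp ?h1 ?h2 //; apply: distr_fin.
- by move=> u /=; rewrite -mulr_sumr distr_supp // mulr1.
- by move=> v /=; rewrite -mulr_suml distr_supp // mul1r.
Qed.

Lemma diag_coupling mu : is_distr mu ->
  is_coupling mu mu (fun p => if p.1 == p.2 then mu p.1 else 0).
Proof.
move=> dm; have muz u : u \notin supp mu -> mu u = 0.
  by rewrite mem_supp ?negbK => [/eqP|]; last apply: distr_fin.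
apply: (@coupling_of_seq _ _ _ (supp mu) (supp mu)) => //.
- by move=> p; case: ifP => // _; apply: distr_ge0.
- exact: supp_uniq.
- exact: supp_uniq.
- move=> [u v] /=; case: (eqVneq u v) => [<-|_] mu0; last by rewrite eqxx in mu0.
  by rewrite !mem_supp ?mu0 //; apply: distr_fin.
- move=> u /=; rewrite sum_seq_pred1 ?supp_uniq //.
  by case: ifP => // /negbT /muz.
- move=> v /=; rewrite (eq_bigr (fun u => if v == u then mu v else 0)).
    by rewrite sum_seq_pred1 ?supp_uniq //; case: ifP => // /negbT /muz.
  by move=> u _; rewrite eq_sym; case: eqP => [->|].
Qed.

Lemma swap_coupling mu nu w : is_distr mu -> is_distr nu ->
  is_coupling mu nu w -> is_coupling nu mu (fun p => w (p.2, p.1)).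
Proof.
move=> dm dn hc; apply: (@coupling_of_seq _ _ _ (supp nu) (supp mu)) => //.
- by move=> p; apply: (coupling_ge0 _ hc).
- exact: supp_uniq.
- exact: supp_uniq.
- move=> [x y] /= /(coupling_supp hc) /andP[h1 h2].
  by rewrite !mem_supp ?h1 ?h2 //; apply: distr_fin.
- by move=> x /=; rewrite (coupling_marg2 dm hc).
- by move=> y /=; rewrite (coupling_marg1 dn hc).
Qed.

Lemma coupling_prob_diff mu nu w (r : seq S) (B : set S) :
  is_coupling mu nu w -> uniq r ->
  (forall x, mu x != 0 -> x \in r) -> (forall x, nu x != 0 -> x \in r) ->
  B `<=` [set` r] ->
  `|prob_of mu B - prob_of nu B| <=
  \sum_(u <- r) \sum_(v <- r) (if (u \in B) != (v \in B) then w (u, v) else 0).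
Proof.
move=> hc ur mur nur Br.
have m1 := coupling_marg1_seq hc ur nur; have m2 := coupling_marg2_seq hc ur mur.
rewrite !(prob_of_seq _ ur Br).
have -> : \sum_(u <- r) (if u \in B then mu u else 0) =
    \sum_(u <- r) \sum_(v <- r) (if u \in B then w (u, v) else 0).
  by apply: eq_bigr => u _; case: ifP => _; [rewrite m1|rewrite big1].
have -> : \sum_(v <- r) (if v \in B then nu v else 0) =
    \sum_(u <- r) \sum_(v <- r) (if v \in B then w (u, v) else 0).
  rewrite [RHS]exchange_big /=.
  by apply: eq_bigr => v _; case: ifP => _; [rewrite m2|rewrite big1].
rewrite -sumrB; apply: le_trans (ler_norm_sum _ _ _) _; apply: ler_sum => u _.
rewrite -sumrB; apply: le_trans (ler_norm_sum _ _ _) _; apply: ler_sum => v _.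
have w0 := coupling_ge0 (u, v) hc.
by case: (u \in B); case: (v \in B);
  rewrite /= ?subrr ?subr0 ?sub0r ?normrN ?normr0 ?ger0_norm.
Qed.

End Couplings.

Section Gluing.
Variables (R : realType) (S : countType) (mu nu rho : S -> R) (w1 w2 : S * S -> R).
Hypotheses (mu_distr : is_distr mu) (nu_distr : is_distr nu) (rho_distr : is_distr rho).
Hypotheses (w1_coupling : is_coupling mu nu w1) (w2_coupling : is_coupling nu rho w2).

Let pi u v x := w1 (u, v) * w2 (v, x) / nu v.

Definition glue p := \sum_(v <- supp nu) pi p.1 v p.2.

Let pi_ge0 u v x : 0 <= pi u v x.
Proof.
by rewrite /pi divr_ge0 ?mulr_ge0 ?(coupling_ge0 _ w1_coupling) ?(coupling_ge0 _ w2_coupling)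
  ?(distr_ge0 _ nu_distr).
Qed.

Let nu_neq0 v : v \in supp nu -> nu v != 0.
Proof. by rewrite mem_supp //; apply: distr_fin. Qed.

Let sum_pi_r u v : v \in supp nu -> \sum_(x <- supp rho) pi u v x = w1 (u, v).
Proof.
move=> vnu; rewrite /pi; under eq_bigr do rewrite mulrAC.
by rewrite -mulr_sumr (coupling_marg1 rho_distr w2_coupling) divfK ?nu_neq0.
Qed.

Let sum_pi_l v x : v \in supp nu -> \sum_(u <- supp mu) pi u v x = w2 (v, x).
Proof.
move=> vnu; rewrite /pi -mulr_suml -mulr_suml (coupling_marg2 mu_distr w1_coupling).
by rewrite mulrAC divff ?mul1r ?nu_neq0.
Qed.

Lemma glue_coupling : is_coupling mu rho glue.
Proof.
apply: (@coupling_of_seq _ _ _ _ _ (supp mu) (supp rho)) => //.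
- by move=> p; apply: sumr_ge0 => v _; apply: pi_ge0.
- exact: supp_uniq.
- exact: supp_uniq.
- move=> [u x] /= /eqP gux.
  have [v vnu piv] : exists2 v, v \in supp nu & pi u v x != 0.
    apply: contrapT => hn; apply: gux; rewrite /glue /= big1_seq // => v /andP[_ vnu].
    by apply/eqP/negPn/negP => piv; apply: hn; exists v.
  move: piv; rewrite /pi !mulf_eq0 !negb_or => /andP[/andP[h1 h2] _].
  have /andP[h3 _] := coupling_supp w1_coupling h1.
  have /andP[_ h4] := coupling_supp w2_coupling h2.
  by rewrite !mem_supp ?h3 ?h4 //; apply: distr_fin.
- move=> u; rewrite /glue /= exchange_big /= big_seq.
  under eq_bigr => v vnu do rewrite sum_pi_r //.
  by rewrite -big_seq (coupling_marg1 nu_distr w1_coupling).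
- move=> x; rewrite /glue /= exchange_big /= big_seq.
  under eq_bigr => v vnu do rewrite sum_pi_l //.
  by rewrite -big_seq (coupling_marg2 nu_distr w2_coupling).
Qed.

Lemma glue_cost_le (e f g : S -> S -> R) : (forall u v x, e u x <= f u v + g v x) ->
  \sum_(u <- supp mu) \sum_(x <- supp rho) glue (u, x) * e u x <=
  \sum_(u <- supp mu) \sum_(v <- supp nu) w1 (u, v) * f u v +
  \sum_(v <- supp nu) \sum_(x <- supp rho) w2 (v, x) * g v x.
Proof.
move=> efg; apply: (@le_trans _ _ (\sum_(u <- supp mu) \sum_(x <- supp rho)
    \sum_(v <- supp nu) (pi u v x * f u v + pi u v x * g v x))).
  apply: ler_sum => u _; apply: ler_sum => x _; rewrite /glue /= mulr_suml.
  by apply: ler_sum => v _; rewrite -mulrDr ler_wpM2l.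
rewrite le_eqVlt; apply/orP; left; apply/eqP.
under eq_bigr do under eq_bigr do rewrite big_split /=.
under eq_bigr do rewrite big_split /=.
rewrite big_split /=; congr (_ + _).
  apply: eq_bigr => u _; rewrite exchange_big /= big_seq [RHS]big_seq.
  by apply: eq_bigr => v vnu; rewrite -mulr_suml sum_pi_r.
rewrite exchange_big /=; under eq_bigr do rewrite exchange_big /=.
rewrite exchange_big /= big_seq [RHS]big_seq.
by apply: eq_bigr => v vnu; apply: eq_bigr => x _; rewrite -mulr_suml sum_pi_l.
Qed.

End Gluing.

Section Kantorovich.
Variables (R : realType) (S : countType) (L : finType).
Variables (lab : S -> L) (tau : S -> S -> R).
Hypothesis tau_distr : is_LMC tau.

Definition coupling_cost (w : S * S -> R) (e : S -> S -> R) :=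
  \sum_(p \in [set: S * S]) w p * e p.1 p.2.

Definition coupling_costs (e : S -> S -> R) s t := [set c : R | exists w,
  is_coupling (tau s) (tau t) w /\ c = coupling_cost w e].

Lemma DeltaE e s t :
  Delta lab tau e s t = if lab s != lab t then 1 else inf (coupling_costs e s t).
Proof. by []. Qed.

Lemma coupling_costE e s t w : is_coupling (tau s) (tau t) w ->
  coupling_cost w e =
  \sum_(u <- supp (tau s)) \sum_(v <- supp (tau t)) w (u, v) * e u v.
Proof. exact: (coupling_sum (fun p => e p.1 p.2)). Qed.

Lemma coupling_cost_ge_term e w mu nu u v : is_coupling mu nu w ->
  (forall u v, 0 <= e u v) -> w (u, v) * e u v <= coupling_cost w e.
Proof.
move=> hc e0; apply: (ler_fsumT_term (f := fun p => w p * e p.1 p.2) (u, v)).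
  by move=> p; rewrite mulr_ge0 ?e0 ?(coupling_ge0 _ hc).
have [[_ [wf _]] _] := hc; apply: sub_finite_set wf => p /=.
by rewrite mulf_eq0 negb_or => /andP[].
Qed.

Lemma coupling_costs_neq0 e s t : coupling_costs e s t !=set0.
Proof.
by eexists; exists (fun p => tau s p.1 * tau t p.2); split; first exact: prod_coupling.
Qed.

Lemma coupling_costs_ge0 e s t : (forall u v, 0 <= e u v) ->
  lbound (coupling_costs e s t) 0.
Proof.
move=> e0 c [w [hc ->]]; apply: fsumr_ge0 => p _.
by rewrite mulr_ge0 ?e0 ?(coupling_ge0 _ hc).
Qed.

Lemma coupling_costs_le1 e s t c : unit_valued e -> coupling_costs e s t c -> c <= 1.
Proof.
move=> eu [w [hc ->]]; rewrite (coupling_costE _ hc).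
rewrite -(coupling_total (tau_distr s) (tau_distr t) hc).
apply: ler_sum => u _; apply: ler_sum => v _.
by apply: ler_piMr; [apply: (coupling_ge0 _ hc)|case/andP: (eu u v)].
Qed.

Lemma Delta_le_cost e s t w : (forall u v, 0 <= e u v) -> lab s = lab t ->
  is_coupling (tau s) (tau t) w -> Delta lab tau e s t <= coupling_cost w e.
Proof.
move=> e0 st hc; rewrite DeltaE st eqxx /=.
by apply: ge_inf; [exists 0; apply: coupling_costs_ge0|exists w].
Qed.

Lemma Delta_near_optimal e s t eps : (forall u v, 0 <= e u v) -> lab s = lab t ->
  0 < eps -> exists2 w, is_coupling (tau s) (tau t) w &
    coupling_cost w e < Delta lab tau e s t + eps.
Proof.
move=> e0 st eps0; rewrite DeltaE st eqxx /=.
have [_ [w [hc ->]] lt] := inf_adherent eps0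
  (conj (coupling_costs_neq0 e s t) (ex_intro _ 0 (coupling_costs_ge0 e0))).
by exists w.
Qed.

Lemma Delta_unit e : unit_valued e -> unit_valued (Delta lab tau e).
Proof.
move=> eu s t; rewrite DeltaE; case: ifP => _; first by rewrite ler01 lexx.
have e0 u v : 0 <= e u v by case/andP: (eu u v).
have [c cst] := coupling_costs_neq0 e s t.
apply/andP; split; first exact: lb_le_inf (coupling_costs_neq0 e s t) (coupling_costs_ge0 e0).
apply: le_trans (coupling_costs_le1 eu cst).
by apply: ge_inf => //; exists 0; apply: coupling_costs_ge0.
Qed.

Lemma Delta_mono e e' s t : (forall u v, 0 <= e u v) ->
  (forall u v, e u v <= e' u v) -> Delta lab tau e s t <= Delta lab tau e' s t.
Proof.
move=> e0 ee'; rewrite !DeltaE; case: ifP => // st.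
apply: lb_le_inf; first exact: coupling_costs_neq0.
move=> _ [w [hc ->]].
have hlb : has_lbound (coupling_costs e s t) by exists 0; apply: coupling_costs_ge0.
apply: le_trans (ge_inf hlb (ex_intro _ w (conj hc erefl))) _.
rewrite !(coupling_costE _ hc); apply: ler_sum => u _; apply: ler_sum => v _.
by rewrite ler_wpM2l ?(coupling_ge0 _ hc).
Qed.

Variable d : S -> S -> R.
Hypothesis d_bisim : is_bisim_dist lab tau d.

(* Knaster--Tarski: the pointwise infimum of the prefixed points below [e] is
   a fixed point of [Delta]. *)
Lemma bisim_dist_le_prefixpoint e : unit_valued e ->
  (forall s t, Delta lab tau e s t <= e s t) -> forall s t, d s t <= e s t.
Proof.
move=> eu epre.
pose G := [set g : S -> S -> R | [/\ unit_valued g, forall s t, g s t <= e s t &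
   forall s t, Delta lab tau g s t <= g s t]].
have Ge : G e by split.
pose f s t := inf [set g s t | g in G].
have flb s t : lbound [set g s t | g in G] 0.
  by move=> _ [g [gu _ _] <-]; case/andP: (gu s t).
have fne s t : [set g s t | g in G] !=set0 by exists (e s t); exists e.
have fle g s t : G g -> f s t <= g s t.
  by move=> Gg; apply: ge_inf; [exists 0; apply: flb|exists g].
have fu : unit_valued f.
  move=> s t; rewrite lb_le_inf //=.
  by apply: le_trans (fle _ _ _ Ge) _; case/andP: (eu s t).
have f0 u v : 0 <= f u v by case/andP: (fu u v).
have fpre s t : Delta lab tau f s t <= f s t.
  apply: lb_le_inf => // _ [g Gg <-].
  apply: le_trans (Delta_mono s t f0 (fun u v => fle g u v Gg)) _.
  by case: Gg.
have GD : G (Delta lab tau f).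
  split; first exact: Delta_unit.
    by move=> s t; apply: le_trans (fpre s t) (fle _ _ _ Ge).
  by move=> s t; apply: (Delta_mono s t _ fpre) => u v; case/andP: (Delta_unit fu u v).
have ffix s t : Delta lab tau f s t = f s t.
  by apply/eqP; rewrite eq_le fpre fle.
move=> s t; have [_ [_ dmin]] := d_bisim.
exact: le_trans (dmin f fu ffix s t) (fle _ _ _ Ge).
Qed.

End Kantorovich.

Section BisimPseudometric.
Variables (R : realType) (S : countType) (L : finType).
Variables (lab : S -> L) (tau : S -> S -> R).
Hypothesis tau_distr : is_LMC tau.
Variable d : S -> S -> R.
Hypothesis d_bisim : is_bisim_dist lab tau d.

Let d_unit : unit_valued d. Proof. by case: d_bisim. Qed.
Let d_ge0 u v : 0 <= d u v. Proof. by case/andP: (d_unit u v). Qed.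
Let d_fix s t : Delta lab tau d s t = d s t. Proof. by case: d_bisim => _ []. Qed.

Lemma bisim_dist_refl u : d u u = 0.
Proof.
pose e x y := if x == y then 0 else d x y.
have eu : unit_valued e by move=> x y; rewrite /e; case: ifP; rewrite ?lexx ?ler01.
have e0 x y : 0 <= e x y by case/andP: (eu x y).
have epre s t : Delta lab tau e s t <= e s t.
  rewrite {2}/e; have [<-|_] := eqVneq s t; last first.
    by rewrite -d_fix; apply: Delta_mono => // x y; rewrite /e; case: ifP.
  have hc := diag_coupling (tau_distr s).
  apply: le_trans (Delta_le_cost e0 (erefl (lab s)) hc) _.
  rewrite (coupling_costE tau_distr _ hc) big1 // => x _; rewrite big1 // => y _ /=.
  by rewrite /e; case: eqP => _; rewrite ?mulr0 ?mul0r.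
apply/eqP; rewrite eq_le d_ge0 andbT.
by have := bisim_dist_le_prefixpoint tau_distr d_bisim eu epre u u; rewrite /e eqxx.
Qed.

Lemma Delta_swap e s t :
  Delta lab tau (fun u v => e v u) s t = Delta lab tau e t s.
Proof.
have sub e' s' t' :
    coupling_costs tau (fun u v => e' v u) s' t' `<=` coupling_costs tau e' t' s'.
  move=> _ [w [hc ->]].
  have hc' := swap_coupling (tau_distr s') (tau_distr t') hc.
  exists (fun p => w (p.2, p.1)); split => //.
  by rewrite (coupling_costE tau_distr _ hc) (coupling_costE tau_distr _ hc') exchange_big.
rewrite !DeltaE eq_sym; case: ifP => // _; congr inf.
by apply/seteqP; split; [exact: sub|exact: (sub (fun u v => e v u))].
Qed.

Lemma bisim_dist_sym u v : d u v = d v u.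
Proof.
have le x y : d x y <= d y x.
  apply: (bisim_dist_le_prefixpoint tau_distr d_bisim (e := fun a b => d b a)).
    by move=> a b; apply: d_unit.
  by move=> a b; rewrite Delta_swap d_fix.
by apply/eqP; rewrite eq_le !le.
Qed.

(* [e a b := inf_c min 1 (d a c + d c b)] is a prefixed point: glue
   near-optimal couplings for [(a, c)] and [(c, b)]. *)
Lemma bisim_dist_triangle u v x : d u x <= d u v + d v x.
Proof.
pose D a b := [set Num.min 1 (d a c + d c b) | c in [set: S]].
pose e a b := inf (D a b).
have Dlb a b : lbound (D a b) 0 by move=> _ [c _ <-]; rewrite le_min ler01 addr_ge0.
have Dne a b : D a b !=set0 by exists (Num.min 1 (d a a + d a b)); exists a.
have eb a c b : e a b <= Num.min 1 (d a c + d c b).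
  by apply: ge_inf; [exists 0; apply: Dlb|exists c].
have eu : unit_valued e.
  by move=> a b; rewrite lb_le_inf //= (le_trans (eb a a b)) // ge_min lexx.
have e0 a b : 0 <= e a b by case/andP: (eu a b).
have eb2 a c b : e a b <= d a c + d c b.
  by apply: le_trans (eb a c b) _; rewrite ge_min lexx orbT.
have epre a b : Delta lab tau e a b <= e a b.
  apply: lb_le_inf => // _ [c _ <-]; rewrite le_min.
  have /andP[_ D1] := Delta_unit lab tau_distr eu a b; rewrite D1 /=.
  have [ac|ac] := eqVneq (lab a) (lab c); last first.
    have -> : d a c = 1 by rewrite -d_fix DeltaE ac.
    by rewrite (le_trans D1) ?lerDl.
  have [cb|cb] := eqVneq (lab c) (lab b); last first.
    have -> : d c b = 1 by rewrite -d_fix DeltaE cb.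
    by rewrite (le_trans D1) ?lerDr.
  apply/ler_addgt0Pr => eps eps0; have eps2 : 0 < eps / 2 by rewrite divr_gt0.
  have [w1 c1 h1] := Delta_near_optimal tau_distr d_ge0 ac eps2.
  have [w2 c2 h2] := Delta_near_optimal tau_distr d_ge0 cb eps2.
  have cw := glue_coupling (tau_distr a) (tau_distr c) (tau_distr b) c1 c2.
  have := Delta_le_cost e0 (etrans ac cb) cw.
  have := glue_cost_le (tau_distr a) (tau_distr c) (tau_distr b) c1 c2 eb2.
  rewrite -!(coupling_costE tau_distr) // !d_fix in h1 h2 *.
  lra.
exact: le_trans (bisim_dist_le_prefixpoint tau_distr d_bisim eu epre u x) (eb2 _ v _).
Qed.

End BisimPseudometric.

Section Subsequences.
Variable R : realType.
Implicit Types (u : R^nat) (f : nat -> nat).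

Lemma limn_einf_eq0_cluster u : (forall n, 0 <= u n) ->
  limn_einf (fun n => (u n)%:E) = 0%E <-> cluster (u @ \oo) 0.
Proof.
move=> u0; rewrite cluster_eventuallyP; split => [u_liminf e M e0|u_cluster].
  have einf_le0 : (einfs (fun n => (u n)%:E) M <= 0)%E.
    rewrite -u_liminf limn_einf_lim (cvg_lim _ (@cvg_einfs_sup R (fun n => (u n)%:E))) //.
    by apply: ereal_sup_ubound; exists M.
  have /ereal_inf_lt [_ [i /= Mi <-]] : (einfs (fun n => (u n)%:E) M < e%:E)%E.
    by apply: le_lt_trans einf_le0 _; rewrite lte_fin.
  by rewrite lte_fin => /ltW ui; exists i; rewrite // sub0r normrN ger0_norm.
rewrite limn_einf_lim; suff -> : einfs (fun n => (u n)%:E) = fun=> 0%E by apply: lim_cst.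
apply/funext => M /=; apply/eqP; rewrite eq_le; apply/andP; split.
  apply/lee_addgt0Pr => e e0; rewrite add0e.
  have [i Mi] := u_cluster e M e0; rewrite sub0r normrN ger0_norm // => ui.
  by apply: le_trans (@ereal_inf_lbound _ _ (u i)%:E _) _; [exists i|rewrite lee_fin].
by apply: le_ereal_inf_tmp => _ [i _ <-]; rewrite lee_fin.
Qed.

Lemma increasing_seq_ge f : increasing_seq f -> forall n, (n <= f n)%N.
Proof.
move=> /increasing_seqP finc; elim=> // n IH.
exact: leq_ltn_trans IH (finc n).
Qed.

Lemma cvg_subseq u (l : R) f : increasing_seq f -> u @ \oo --> l -> (u \o f) @ \oo --> l.
Proof.
move=> finc ul; apply: cvg_comp ul => A [M _ MA]; exists M => // n /= Mn.
exact/MA/(leq_trans Mn (increasing_seq_ge finc n)).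
Qed.

Lemma cluster_subseq u (l : R) f : increasing_seq f -> (u \o f) @ \oo --> l ->
  cluster (u @ \oo) l.
Proof. by move=> finc ufl; apply/cluster_eventually_cvg; exists f. Qed.

Lemma bounded_fun_le1 u : (forall n, `|u n| <= 1) -> bounded_fun u.
Proof. by move=> u1; exists 1; split => // M M1 n _; apply: le_trans (u1 n) (ltW M1). Qed.

Lemma bounded_family_subseq (I : eqType) (r : seq I) (a : I -> R^nat) :
  (forall i, bounded_fun (a i)) ->
  exists2 f, increasing_seq f & forall i, i \in r -> cvgn (a i \o f).
Proof.
move=> abnd; elim: r => [|i r [f finc IH]]; first by exists id.
have [M [Mreal Mbnd]] := abnd i.
have : bounded_fun (a i \o f).
  by exists M; split => // x Mx n _; apply: Mbnd.
move=> /bolzano_weierstrass [g ginc cvg_g].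
exists (f \o g) => [m n|j]; first by rewrite /= finc; exact: ginc.
rewrite inE => /orP[/eqP->//|jr].
by have /cvg_ex [l /(cvg_subseq ginc) fgl] := IH j jr; apply/cvg_ex; exists l.
Qed.

End Subsequences.

Section FiniteLimits.
Variable R : realType.

Lemma cvg_sum_seq (I : eqType) (r : seq I) (F : I -> R^nat) (l : I -> R) :
  (forall i, i \in r -> F i @ \oo --> l i) ->
  (fun n => \sum_(i <- r) F i n) @ \oo --> \sum_(i <- r) l i.
Proof.
move=> Fl; rewrite big_seq; under eq_fun do rewrite big_seq.
by apply: cvg_big => //; exact: add_continuous.
Qed.

Lemma cvg_fsum (T : choiceType) (A : set T) (F : T -> R^nat) (l : T -> R) :
  finite_set A -> (forall x, A x -> F x @ \oo --> l x) ->
  (fun n => \sum_(x \in A) F x n) @ \oo --> \sum_(x \in A) l x.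
Proof.
move=> fA Fl; rewrite fsbig_finite //; under eq_fun do rewrite fsbig_finite //.
by apply: cvg_sum_seq => x; rewrite in_fset_set // => /set_mem /Fl.
Qed.

Lemma bigmax_set_ge0 (T : choiceType) (A : set T) (F : T -> R) : 0 <= bigmax_set A F.
Proof. exact: bigmax_ge_id. Qed.

Lemma bigmax_set_le (T : choiceType) (A : set T) (F : T -> R) c : 0 <= c ->
  (forall p, A p -> F p <= c) -> bigmax_set A F <= c.
Proof.
move=> c0 Fc; case: finite_supportP; rewrite ?big_nil // => X XA _ _.
by rewrite big_seq; apply: bigmax_le => // p /XA; apply: Fc.
Qed.

Lemma bigmax_set_ge (T : choiceType) (A : set T) (F : T -> R) p :
  finite_set A -> A p -> F p <= bigmax_set A F.
Proof.
move=> fA Ap; have [->|Fp] := eqVneq (F p) 0; first exact: bigmax_set_ge0.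
apply: le_bigmax_seq => //; rewrite in_finite_support; last exact: finite_setIl.
by apply/mem_set; split => //; apply/eqP.
Qed.

Lemma cvg0_bigmax_set (T : choiceType) (A : set T) (F : T -> R^nat) :
  finite_set A -> (forall p n, 0 <= F p n) -> (forall p, A p -> F p @ \oo --> 0) ->
  (fun n => bigmax_set A (F^~ n)) @ \oo --> 0.
Proof.
move=> fA F0 Fl.
apply: (@squeeze_cvgr _ _ _ _ (cst 0) (fun n => \sum_(p <- fseq A) F p n)).
- near=> n; rewrite bigmax_set_ge0 /=; apply: bigmax_set_le => [|p Ap].
    exact: sumr_ge0.
  by apply: ler_sum_seq_term => //; [exact: fseq_uniq|apply/mem_fseq].
- exact: cvg_cst.
- have := @cvg_sum_seq _ (fseq A) F (fun=> 0) (fun p pA => Fl p ((mem_fseq p fA).1 pA)).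
  by rewrite big1.
Unshelve. all: by end_near.
Qed.

Lemma cvg0_of_mul_le (a b c : R^nat) (l : R) :
  b @ \oo --> 0 -> c @ \oo --> l -> 0 < l ->
  (forall n, 0 <= a n) -> (forall n, a n * c n <= b n) -> a @ \oo --> 0.
Proof.
move=> b0 cl l0 a0 abc; have l20 : 0 < l / 2 by rewrite divr_gt0.
apply: (@squeeze_cvgr _ _ _ _ (cst 0) (fun n => b n * (2 / l))).
- near=> n; rewrite a0 /=.
  have cn : l / 2 <= c n.
    by near: n; apply: (cvgr_ge l cl); rewrite ltr_pdivrMr // ltr_pMr // ltr1n.
  have abn : a n * (l / 2) <= b n := le_trans (ler_wpM2l (a0 n) cn) (abc n).
  by rewrite -invf_div ler_pdivlMr.
- exact: cvg_cst.
- by rewrite -(mul0r (2 / l)); apply: cvgM b0 (cvg_cst _).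
Unshelve. all: by end_near.
Qed.

Lemma cvg_norm_subr0 (u : R^nat) (l : R) :
  u @ \oo --> l -> (fun n => `|u n - l|) @ \oo --> 0.
Proof. by move=> ul; apply/norm_cvg0P; rewrite -(subrr l); apply: cvgB ul (cvg_cst l). Qed.

Lemma cvg_maxr (u v : R^nat) (a b : R) : u @ \oo --> a -> v @ \oo --> b ->
  (fun n => Num.max (u n) (v n)) @ \oo --> Num.max a b.
Proof.
move=> ua vb; rewrite maxr_absE; under eq_fun do rewrite maxr_absE.
by apply: cvgM; [apply: cvgD; [exact: cvgD|apply: cvg_norm; exact: cvgB]|exact: cvg_cst].
Qed.

End FiniteLimits.

Lemma finite_partition_classes (T : choiceType) (A : set T) (c : T -> set T) :
  finite_set A -> (forall u, A u -> c u u) -> (forall u, c u `<=` A) ->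
  (forall u u' x, A u -> A u' -> c u x -> c u' x -> c u = c u') ->
  exists k (P : 'I_k -> set T), [/\ forall j, exists2 u, A u & P j = c u,
    forall j j', j != j' -> P j `&` P j' = set0 &
    \bigcup_(j in [set: 'I_k]) P j = A].
Proof.
move=> fA cu cA ceq; have fC : finite_set (c @` A) := finite_image c fA.
pose cs := fseq (c @` A); pose P (j : 'I_(size cs)) := nth set0 cs j.
have Pc j : exists2 u, A u & P j = c u.
  have /(mem_fseq _ fC) [u Au cuP] := mem_nth set0 (ltn_ord j).
  by exists u; last rewrite /P cuP.
exists (size cs), P; split => // [j j' jj'|].
  apply/seteqP; split => // x [Pjx Pj'x]; move/negP: jj'; apply; apply/eqP/val_inj.
  have [u Au Pju] := Pc j; have [u' Au' Pj'u'] := Pc j'.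
  apply/eqP; rewrite -(nth_uniq set0 (ltn_ord j) (ltn_ord j') (fseq_uniq _)); apply/eqP.
  by rewrite -/(P j) -/(P j') Pju Pj'u' (ceq u u' x) -?Pju -?Pj'u'.
apply/seteqP; split => [x [j _]|x Ax].
  by have [u _ ->] := Pc j; apply: cA.
have csx : c x \in cs by apply/(mem_fseq _ fC); exists x.
by exists (Ordinal (etrans (index_mem _ _) csx)) => //; rewrite /P /= nth_index //; exact: cu.
Qed.

Section LimitOfLMCs.
Variables (R : realType) (S : countType) (L : finType) (lab : S -> L).
Variables (tau : nat -> S -> S -> R) (d : nat -> S -> S -> R).
Hypothesis tau_distr : forall n, is_LMC (tau n).
Hypothesis d_bisim : forall n, is_bisim_dist lab (tau n) (d n).
Variables (S0 N : set S).
Hypothesis S0_fin : finite_set S0.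
Hypothesis N_fin : finite_set N.
Hypothesis tau_suppN : forall n s x, S0 s -> tau n s x != 0 -> N x.
Hypothesis tau_cvg : forall s x, S0 s -> N x -> cvgn (fun n => tau n s x).
Hypothesis d_cvg : forall u v, N u -> N v -> cvgn (fun n => d n u v).
Hypothesis d_S0_cvg0 : forall s t, S0 s -> S0 t -> (fun n => d n s t) @ \oo --> 0.

Definition tau_lim s x := limn (fun n => tau n s x).
Definition d_lim u v := limn (fun n => d n u v).

Let d_ge0 n u v : 0 <= d n u v.
Proof. by have [/(_ u v) /andP[]] := d_bisim n. Qed.

Let tau_outN n s x : S0 s -> ~ N x -> tau n s x = 0.
Proof. by move=> S0s Nx; apply/eqP/negPn/negP => /(tau_suppN S0s). Qed.

Lemma tau_lim_outN s x : S0 s -> ~ N x -> tau_lim s x = 0.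
Proof.
move=> S0s Nx; rewrite /tau_lim (_ : (fun n => tau n s x) = cst 0) ?lim_cst //.
by apply/funext => n; rewrite tau_outN.
Qed.

Lemma tau_lim_cvg s x : S0 s -> (fun n => tau n s x) @ \oo --> tau_lim s x.
Proof.
move=> S0s; have [Nx|Nx] := pselect (N x); first exact: tau_cvg.
by rewrite tau_lim_outN //; under eq_fun do rewrite tau_outN //; exact: cvg_cst.
Qed.

Lemma d_lim_cvg u v : N u -> N v -> (fun n => d n u v) @ \oo --> d_lim u v.
Proof. exact: d_cvg. Qed.

Lemma prob_of_tau_cvg s (B : set S) : S0 s -> B `<=` N ->
  (fun n => prob_of (tau n s) B) @ \oo --> prob_of (tau_lim s) B.
Proof.
move=> S0s BN; apply: cvg_fsum (sub_finite_set BN N_fin) _ => x _.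
exact: tau_lim_cvg.
Qed.

Lemma tau_lim_distr s : S0 s -> is_distr (tau_lim s).
Proof.
move=> S0s; have sumN (f : S -> R) : (forall x, ~ N x -> f x = 0) ->
    \sum_(x \in [set: S]) f x = prob_of f N.
  by move=> fN; apply/esym/fsbig_widen => // x [_ /fN].
split.
  by move=> x; apply: limr_ge; [exact: tau_lim_cvg|near=> n; exact: distr_ge0 (tau_distr n s)].
split.
  apply: sub_finite_set N_fin => x /= /eqP tx; apply: contrapT => Nx.
  exact/tx/tau_lim_outN.
rewrite sumN => [|x]; last exact: tau_lim_outN.
have probN1 : (fun n => prob_of (tau n s) N) = fun=> 1.
  by apply/funext => n; rewrite -sumN ?(tau_distr n s).2.2 // => x; apply: tau_outN.
have := prob_of_tau_cvg S0s (@subset_refl _ N); rewrite probN1.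
by move=> h1; apply: (cvg_unique (@Rhausdorff R) h1); exact: cvg_cst.
Unshelve. all: by end_near.
Qed.

Lemma d_lim_ge0 u v : N u -> N v -> 0 <= d_lim u v.
Proof.
by move=> Nu Nv; apply: (@limr_ge _ _ _ _ 0 (fun n => d n u v)); [exact: d_cvg|near=> n].
Unshelve. all: by end_near.
Qed.

Lemma d_lim_refl u : d_lim u u = 0.
Proof.
rewrite /d_lim (_ : (fun n => d n u u) = cst 0) ?lim_cst //.
by apply/funext => n; rewrite (bisim_dist_refl (tau_distr n) (d_bisim n)).
Qed.

Lemma d_lim_sym u v : d_lim u v = d_lim v u.
Proof.
rewrite /d_lim (_ : (fun n => d n u v) = (fun n => d n v u)) //.
by apply/funext => n; apply: (bisim_dist_sym (tau_distr n) (d_bisim n)).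
Qed.

Lemma d_lim_triangle u v x : N u -> N v -> N x -> d_lim u x <= d_lim u v + d_lim v x.
Proof.
move=> Nu Nv Nx; apply: ler_cvg_to (d_lim_cvg Nu Nx) _ _.
  exact: cvgD (d_lim_cvg Nu Nv) (d_lim_cvg Nv Nx).
by near=> n; apply: (bisim_dist_triangle (tau_distr n) (d_bisim n)).
Unshelve. all: by end_near.
Qed.

Definition d_lim_class u := [set v | N v /\ d_lim u v = 0].

Lemma d_lim_class_eq u u' x : N u -> N u' ->
  d_lim_class u x -> d_lim_class u' x -> d_lim_class u = d_lim_class u'.
Proof.
have sub a a' y : N a -> N a' -> d_lim_class a y -> d_lim_class a' y ->
    d_lim_class a `<=` d_lim_class a'.
  move=> Na Na' [Ny ay] [_ a'y] v [Nv av]; split => //; apply/eqP.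
  rewrite eq_le d_lim_ge0 // andbT; apply: le_trans (d_lim_triangle Na' Ny Nv) _.
  rewrite a'y add0r; apply: le_trans (d_lim_triangle Ny Na Nv) _.
  by rewrite d_lim_sym ay av addr0.
by move=> Nu Nu' ux u'x; apply/seteqP; split; [exact: (sub u u' x)|exact: (sub u' u x)].
Qed.

Lemma d_lim_class_sep u0 u v : N u0 -> N u -> N v ->
  d_lim_class u0 u -> ~ d_lim_class u0 v -> 0 < d_lim u v.
Proof.
move=> Nu0 Nu Nv [_ u0u] u0v; rewrite lt_neqAle d_lim_ge0 // andbT eq_sym.
apply/eqP => uv; apply: u0v; split => //; apply/eqP.
rewrite eq_le d_lim_ge0 //= (le_trans (d_lim_triangle Nu0 Nu Nv)) //.
by rewrite u0u uv addr0.
Qed.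

Lemma lab_S0 s t : S0 s -> S0 t -> lab s = lab t.
Proof.
move=> S0s S0t; apply/eqP/negPn/negP => st.
have d1 n : d n s t = 1 by have [_ [<- _]] := d_bisim n; rewrite DeltaE st.
have := d_S0_cvg0 S0s S0t; under eq_fun do rewrite d1.
by move=> /(cvg_unique (@Rhausdorff R) (cvg_cst (1 : R))) /eqP; rewrite oner_eq0.
Qed.

Lemma near_optimal_couplings s t : lab s = lab t ->
  exists W : nat -> S * S -> R, forall n, is_coupling (tau n s) (tau n t) (W n) /\
    coupling_cost (W n) (d n) < d n s t + n.+1%:R^-1.
Proof.
move=> st; have /choice [W hW] : forall n, exists w, is_coupling (tau n s) (tau n t) w /\
    coupling_cost w (d n) < d n s t + n.+1%:R^-1.
  move=> n; have eps0 : 0 < (n.+1%:R : R)^-1 by rewrite invr_gt0 ltr0Sn.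
  have [w hw wcost] := Delta_near_optimal (tau_distr n) (d_ge0 n) st eps0.
  by exists w; have [_ [<- _]] := d_bisim n.
by exists W.
Qed.

Lemma near_optimal_mass_cvg0 s t (W : nat -> S * S -> R) u v :
  S0 s -> S0 t -> N u -> N v -> 0 < d_lim u v ->
  (forall n, is_coupling (tau n s) (tau n t) (W n) /\
     coupling_cost (W n) (d n) < d n s t + n.+1%:R^-1) ->
  (fun n => W n (u, v)) @ \oo --> 0.
Proof.
move=> S0s S0t Nu Nv uv0 hW.
apply: (@cvg0_of_mul_le _ _ (fun n => d n s t + n.+1%:R^-1) _ _ _ (d_lim_cvg Nu Nv) uv0).
- by rewrite -[0]addr0; apply: cvgD (d_S0_cvg0 S0s S0t) _; exact: cvg_harmonic.
- by move=> n; exact: coupling_ge0 (hW n).1.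
- move=> n; have [hc cost_lt] := hW n; apply: le_trans (ltW cost_lt).
  exact: coupling_cost_ge_term hc (d_ge0 n).
Qed.

(* Mass crossing the boundary of a class sits on pairs at positive limit
   distance, so near-optimal couplings move less and less of it. *)
Lemma prob_of_class_eq s t u0 : S0 s -> S0 t -> N u0 ->
  prob_of (tau_lim s) (d_lim_class u0) = prob_of (tau_lim t) (d_lim_class u0).
Proof.
move=> S0s S0t Nu0; set B := d_lim_class u0.
have BN : B `<=` N by move=> x [].
have inN x : N x -> x \in fseq N := (mem_fseq x N_fin).2.
have [W hW] := near_optimal_couplings (lab_S0 S0s S0t).
pose cross n := \sum_(u <- fseq N) \sum_(v <- fseq N)
  (if (u \in B) != (v \in B) then W n (u, v) else 0).
have cross0 : cross @ \oo --> 0.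
  suff : cross @ \oo --> \sum_(u <- fseq N) \sum_(v <- fseq N) (0 : R).
    by rewrite big1 // => u _; rewrite big1.
  apply: cvg_sum_seq => u /(mem_fseq u N_fin) Nu.
  apply: cvg_sum_seq => v /(mem_fseq v N_fin) Nv.
  case uv_cross : ((u \in B) != (v \in B)); last exact: cvg_cst.
  apply: (near_optimal_mass_cvg0 S0s S0t Nu Nv _ hW).
  move: uv_cross; case: (boolP (u \in B)) => uB; case: (boolP (v \in B)) => vB // _.
    by apply: d_lim_class_sep Nu0 Nu Nv (set_mem uB) _ => /mem_set; apply/negP.
  rewrite d_lim_sym; apply: d_lim_class_sep Nu0 Nv Nu (set_mem vB) _.
  by move=> /mem_set; apply/negP.
have diff0 : (fun n => prob_of (tau n s) B - prob_of (tau n t) B) @ \oo --> 0.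
  apply/norm_cvg0P; apply: (@squeeze_cvgr _ _ _ _ (cst 0) cross) => //; last exact: cvg_cst.
  near=> n; rewrite normr_ge0 /=; have [hc _] := hW n.
  apply: coupling_prob_diff hc (fseq_uniq N) _ _ (fun x Bx => inN x (BN x Bx)) => x.
    by move/(tau_suppN S0s)/inN.
  by move/(tau_suppN S0t)/inN.
apply/eqP; rewrite -subr_eq0; apply/eqP.
apply: (cvg_unique (@Rhausdorff R) _ diff0).
exact: cvgB (prob_of_tau_cvg S0s BN) (prob_of_tau_cvg S0t BN).
Unshelve. all: by end_near.
Qed.

Lemma l1dist_tau_lim_cvg0 s : S0 s ->
  (fun n => l1dist (tau n s) (tau_lim s)) @ \oo --> 0.
Proof.
move=> S0s; have onN n : l1dist (tau n s) (tau_lim s) =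
    \sum_(x \in N) `|tau n s x - tau_lim s x|.
  apply/esym/fsbig_widen => // x [_ /= Nx].
  by rewrite tau_outN // tau_lim_outN // subrr normr0.
under eq_fun do rewrite onN.
suff : (fun n => \sum_(x \in N) `|tau n s x - tau_lim s x|) @ \oo -->
    \sum_(x \in N) (0 : R) by rewrite fsbig1.
by apply: cvg_fsum N_fin _ => x _; apply/cvg_norm_subr0/tau_lim_cvg.
Qed.

Lemma cvg0_partition_error k (P : 'I_k -> set S) (mu : 'I_k -> R) :
  (forall j, exists2 u, N u & P j = d_lim_class u) ->
  (forall s j, S0 s -> prob_of (tau_lim s) (P j) = mu j) ->
  (fun n => Num.max
     (bigmax_set S0 (fun s => l1dist (tau n s) (tau_lim s)))
     (Num.max
        (bigmax_set (S0 `*` [set: 'I_k])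
           (fun p => `|prob_of (tau n p.1) (P p.2) - mu p.2|))
        (bigmax_set [set p : S * S | exists j, P j p.1 /\ P j p.2]
           (fun p => d n p.1 p.2)))) @ \oo --> 0.
Proof.
move=> Pcls Pmu; have PN j : P j `<=` N by have [u _ ->] := Pcls j; move=> x [].
rewrite -[X in _ --> X](maxxx 0) -[X in _ --> Num.max _ X](maxxx 0).
apply: cvg_maxr; last apply: cvg_maxr.
- apply: cvg0_bigmax_set S0_fin _ _ => [s n|s S0s]; last exact: l1dist_tau_lim_cvg0.
  by apply: fsumr_ge0.
- apply: cvg0_bigmax_set _ _ _ => [|p n //|[s j] [/= S0s _]].
    by apply: finite_setX => //; apply: finite_finset.
  by rewrite -(Pmu s j S0s); apply/cvg_norm_subr0/prob_of_tau_cvg.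
- apply: cvg0_bigmax_set _ _ _ => [|p n|[u v] [j /= [Pju Pjv]]]; last first.
  + have [u0 Nu0 Pj] := Pcls j; rewrite Pj in Pju Pjv.
    have [[Nu u0u] [Nv u0v]] := (Pju, Pjv).
    have uv0 : d_lim u v = 0.
      apply/eqP; rewrite eq_le d_lim_ge0 // andbT.
      by apply: le_trans (d_lim_triangle Nu Nu0 Nv) _; rewrite d_lim_sym u0u u0v addr0.
    by rewrite -uv0; apply: d_lim_cvg.
  + exact: d_ge0.
  + apply: sub_finite_set (finite_setX N_fin N_fin) => -[u v] [j /= [Pju Pjv]].
    by split; apply: (PN j).
Qed.

Lemma limit_partition : S0 !=set0 ->
  exists (tauS : S -> S -> R) (k : nat) (P : 'I_k -> set S) (mu : 'I_k -> R),
    (forall s, S0 s -> is_distr (tauS s)) /\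
    (forall j, P j !=set0) /\
    (forall j j', j != j' -> P j `&` P j' = set0) /\
    \bigcup_(j in [set: 'I_k]) P j = N /\
    is_distr mu /\
    (forall s j, S0 s -> prob_of (tauS s) (P j) = mu j) /\
    (fun n => Num.max
       (bigmax_set S0 (fun s => l1dist (tau n s) (tauS s)))
       (Num.max
          (bigmax_set (S0 `*` [set: 'I_k])
             (fun p => `|prob_of (tau n p.1) (P p.2) - mu p.2|))
          (bigmax_set [set p : S * S | exists j, P j p.1 /\ P j p.2]
             (fun p => d n p.1 p.2)))) @ \oo --> 0.
Proof.
move=> [s0 S0s0].
have [k [P [Pcls Pdisj PN]]] : exists k (P : 'I_k -> set S),
    [/\ forall j, exists2 u, N u & P j = d_lim_class u,
      forall j j', j != j' -> P j `&` P j' = set0 &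
      \bigcup_(j in [set: 'I_k]) P j = N].
  apply: finite_partition_classes N_fin _ _ d_lim_class_eq => [u Nu|u v []//].
  by split; rewrite ?d_lim_refl.
pose mu j := prob_of (tau_lim s0) (P j).
have Pmu s j : S0 s -> prob_of (tau_lim s) (P j) = mu j.
  by move=> S0s; have [u Nu Pj] := Pcls j; rewrite /mu Pj; apply: prob_of_class_eq.
exists tau_lim, k, P, mu; split; first exact: tau_lim_distr.
split; first by move=> j; have [u Nu ->] := Pcls j; exists u; split; rewrite ?d_lim_refl.
do 2!split => //; split.
  apply: distr_partition (tau_lim_distr S0s0) _ N_fin Pdisj PN => x.
  by apply: contra_neqP => /(tau_lim_outN S0s0).
by split => //; apply: cvg0_partition_error.
Qed.

End LimitOfLMCs.

Lemma limit_subsequence (R : realType) (S : countType) (tau d : nat -> S -> S -> R)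
    (S0 N : set S) : finite_set S0 -> finite_set N ->
  (forall i, unit_valued (tau i)) -> (forall i, unit_valued (d i)) ->
  limn_einf (fun i => (bigmax_set (S0 `*` S0) (fun p => d i p.1 p.2))%:E) = 0%E ->
  exists2 phi : nat -> nat, increasing_seq phi &
    [/\ forall s x, S0 s -> N x -> cvgn (fun n => tau (phi n) s x),
        forall u v, N u -> N v -> cvgn (fun n => d (phi n) u v) &
        forall s t, S0 s -> S0 t -> (fun n => d (phi n) s t) @ \oo --> 0].
Proof.
move=> S0_fin N_fin tau_unit d_unit diam_liminf.
have d_ge0 i u v : 0 <= d i u v by case/andP: (d_unit i u v).
pose diam i := bigmax_set (S0 `*` S0) (fun p => d i p.1 p.2).
have [f0 f0_inc diam_f0] : exists2 f0, increasing_seq f0 & (diam \o f0) @ \oo --> 0.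
  by apply/cluster_eventually_cvg/limn_einf_eq0_cluster => // i; apply: bigmax_set_ge0.
pose entry (e : (S * S) + (S * S)) n :=
  match e with inl p => tau (f0 n) p.1 p.2 | inr p => d (f0 n) p.1 p.2 end.
have [f1 f1_inc entry_cvg] : exists2 f1, increasing_seq f1 & forall e,
    e \in map inl (fseq (S0 `*` N)) ++ map inr (fseq (N `*` N)) -> cvgn (entry e \o f1).
  apply: bounded_family_subseq => -[[u v]|[u v]]; apply: bounded_fun_le1 => n /=.
    by have /andP[t0 t1] := tau_unit (f0 n) u v; rewrite ger0_norm.
  by have /andP[d0 d1] := d_unit (f0 n) u v; rewrite ger0_norm.
exists (f0 \o f1) => [m n|]; first by rewrite /= f0_inc; exact: f1_inc.
split => [s x S0s Nx|u v Nu Nv|s t S0s S0t].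
- apply: (entry_cvg (inl (s, x))).
  by rewrite mem_cat map_f //; apply/mem_fseq; [exact: finite_setX|].
- apply: (entry_cvg (inr (u, v))).
  by rewrite mem_cat (map_f inr) ?orbT //; apply/mem_fseq; [exact: finite_setX|].
- apply: (@squeeze_cvgr _ _ _ _ (cst 0) (diam \o f0 \o f1)).
  + near=> n; rewrite d_ge0 /=.
    by apply: (@bigmax_set_ge _ _ _ (fun p => d _ p.1 p.2) (s, t)) => //; exact: finite_setX.
  + exact: cvg_cst.
  + exact: cvg_subseq f1_inc diam_f0.
Unshelve. all: by end_near.
Qed.

Unset Implicit Arguments.

Theorem mainTheorem12 (R : realType) (S : countType) (L : finType)
  (s_inhab : S) (lab : S -> L) (tau : nat -> S -> S -> R)
  (d : nat -> S -> S -> R)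
  (Hlmc : forall i, is_LMC (tau i))
  (Hd : forall i, is_bisim_dist lab (tau i) (d i))
  (Nb : S -> set S) (HNfin : forall s, finite_set (Nb s))
  (HNsupp : forall i s x, tau i s x != 0 -> Nb s x)
  (S0 : set S) (HS0fin : finite_set S0) (HS0ne : S0 !=set0)
  (HS0 : limn_einf (fun i => (bigmax_set (S0 `*` S0) (fun p => d i p.1 p.2))%:E)
           = 0%E) :
  let N := \bigcup_(s in S0) Nb s in
  exists (tauS : S -> S -> R) (k : nat) (P : 'I_k -> set S) (mu : 'I_k -> R),
    (forall s, S0 s -> is_distr (tauS s)) /\
    (* {P j} is a partition of N *)
    (forall j, P j !=set0) /\
    (forall j j', j != j' -> P j `&` P j' = set0) /\
    \bigcup_(j in [set: 'I_k]) P j = N /\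
    (* mu is a distribution on {1..k} *)
    is_distr mu /\
    (forall s j, S0 s -> prob_of (tauS s) (P j) = mu j) /\
    limn_einf (fun i =>
      (Num.max
        (bigmax_set S0 (fun s => l1dist (tau i s) (tauS s)))
        (Num.max
          (bigmax_set (S0 `*` [set: 'I_k])
             (fun p => `|prob_of (tau i p.1) (P p.2) - mu p.2|))
          (bigmax_set [set p : S * S | exists j, P j p.1 /\ P j p.2]
             (fun p => d i p.1 p.2))))%:E) = 0%E.
Proof.
move=> N; have N_fin : finite_set N by apply: bigcup_finite => // s _; apply: HNfin.
have tau_suppN i s x : S0 s -> tau i s x != 0 -> N x by move=> S0s /HNsupp; exists s.
have tau_unit i : unit_valued (tau i).
  by move=> s x; rewrite (distr_ge0 _ (Hlmc i s)) (distr_le1 _ (Hlmc i s)).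
have d_unit i : unit_valued (d i) by case: (Hd i).
have [phi phi_inc [tau_cvg d_cvg d_S0]] := limit_subsequence HS0fin N_fin tau_unit d_unit HS0.
have [tauS [k [P [mu [? [? [? [? [? [? partition_cvg]]]]]]]]]] :=
  limit_partition (fun n => Hlmc (phi n)) (fun n => Hd (phi n)) HS0fin N_fin
    (fun n => tau_suppN (phi n)) tau_cvg d_cvg d_S0 HS0ne.
exists tauS, k, P, mu; do 6!(split; first by []).
apply/limn_einf_eq0_cluster => [i|]; first by rewrite le_max bigmax_set_ge0.
exact: cluster_subseq phi_inc partition_cvg.
Qed.
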